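(* For any two finite integer sequences $A$ and $B$, $\mathrm{lcis}(\mathrm{inflate}(A),\mathrm{inflate}(B))=2\cdot\mathrm{lcis}(A,B)$.
   Context: For integer sequences, $\mathrm{lcis}(X_1,\dots,X_k)$ denotes the length of the longest strictly increasing sequence that is a subsequence of each $X_i$. For $A=\langle a_0,\dots,a_{n-1}\rangle$, $\mathrm{inflate}(A)=\langle 2a_0-1,2a_0,2a_1-1,2a_1,\dots,2a_{n-1}-1,2a_{n-1}\rangle$. *)

From mathcomp Require Import all_boot all_order all_algebra.
Set Implicit Arguments. Unset Strict Implicit. Unset Printing Implicit Defensive.
Import Order.TTheory GRing.Theory Num.Theory.
Local Open Scope ring_scope.

Definition is_cis (s X Y : seq int) : bool :=
  [&& sorted (fun a b : int => a < b) s, subseq s X & subseq s Y].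

(* lcis X Y = maximum length of a common strictly increasing subsequence;
   every subsequence of X is mask m X for some m of length size X. *)
Definition lcis (X Y : seq int) : nat :=
  (\max_(m : (size X).-tuple bool | is_cis (mask m X) X Y) size (mask m X))%N.

Definition inflate (A : seq int) : seq int :=
  flatten [seq [:: 2 * a - 1; 2 * a] | a <- A].

From mathcomp Require Import all_boot all_order all_algebra zify.
Import Order.TTheory GRing.Theory Num.Theory.

(** A common increasing subsequence of [A] and [B] inflates to one
    of twice the length.  Conversely, the even and the odd entries of a common
    increasing subsequence of the inflated sequences are images of common
    increasing subsequences of [A] and [B] under the order embeddings
    [a |-> 2a] and [a |-> 2a - 1], so each part has length at most [lcis A B]. *)

Local Open Scope ring_scope.

Lemma size_le_lcis s X Y : is_cis s X Y -> (size s <= lcis X Y)%N.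
Proof.
move=> cis_s; have /and3P[_ /subseqP[m size_m def_s] _] := cis_s.
rewrite def_s in cis_s *.
by apply: (leq_bigmax_cond (Tuple (introT eqP size_m))).
Qed.

Lemma lcis_le X Y n :
  (forall s, is_cis s X Y -> size s <= n)%N -> (lcis X Y <= n)%N.
Proof. by move=> le_n; apply/bigmax_leqP => m /le_n. Qed.

Lemma lcis_witness X Y : exists2 s, is_cis s X Y & size s = lcis X Y.
Proof.
pose m0 := nseq_tuple (size X) false.
have cis0 : is_cis (mask m0 X) X Y by rewrite mask_false /is_cis !sub0seq.
rewrite /lcis (bigop.bigmax_eq_arg m0 cis0); case: arg_maxnP => //= m cis_m _.
by exists (mask m X).
Qed.

Lemma is_cis_filter (p : pred int) s X Y :
  is_cis s X Y -> is_cis (filter p s) (filter p X) (filter p Y).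
Proof.
case/and3P=> sorted_s sub_sX sub_sY; apply/and3P; split.
- by apply: sorted_filter sorted_s => y x z; apply: lt_trans.
- by rewrite subseq_filter filter_all (subseq_trans (filter_subseq _ _)).
- by rewrite subseq_filter filter_all (subseq_trans (filter_subseq _ _)).
Qed.

Lemma subseq_map_inj (T1 T2 : eqType) (f : T1 -> T2) s X :
  injective f -> subseq (map f s) (map f X) = subseq s X.
Proof.
move=> f_inj; apply/idP/idP; last exact: map_subseq.
case/subseqP=> m _; rewrite -map_mask => /(inj_map f_inj) ->.
exact: mask_subseq.
Qed.

Section MonotoneMap.

Variable g : int -> int.
Hypothesis g_mono : {mono g : x y / x < y}.

Let g_inj : injective g.
Proof. by apply/inc_inj/le_mono => x y; rewrite g_mono. Qed.

Lemma is_cis_map s X Y :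
  is_cis (map g s) (map g X) (map g Y) = is_cis s X Y.
Proof.
by rewrite /is_cis !subseq_map_inj // sorted_map (eq_sorted g_mono).
Qed.

Lemma lcis_map X Y : lcis (map g X) (map g Y) = lcis X Y.
Proof.
apply/eqP; rewrite eqn_leq; apply/andP; split; apply: lcis_le => s cis_s.
- have /and3P[_ /subseqP[m _ def_s] _] := cis_s.
  rewrite -map_mask in def_s; rewrite def_s is_cis_map in cis_s.
  by rewrite def_s size_map size_le_lcis.
- by rewrite -(size_map g) size_le_lcis // is_cis_map.
Qed.

End MonotoneMap.

Lemma inflate_cons a A : inflate (a :: A) = 2 * a - 1 :: 2 * a :: inflate A.
Proof. by []. Qed.

Lemma size_inflate A : size (inflate A) = (2 * size A)%N.
Proof. by elim: A => //= a A ->; rewrite mulnS. Qed.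

Lemma subseq_inflate s X : subseq s X -> subseq (inflate s) (inflate X).
Proof.
elim: X s => [|x X IH] [|y s] //.
rewrite inflate_cons [subseq _ (x :: X)]/=.
case: eqP => [-> /IH|_ /IH sub_s]; first by rewrite inflate_cons /= !eqxx.
apply: (subseq_trans sub_s); apply: (subseq_trans (subseq_cons _ (2 * x))).
exact: subseq_cons.
Qed.

Lemma path_inflate x s :
  path (fun a b : int => a < b) x s ->
  path (fun a b : int => a < b) (2 * x) (inflate s).
Proof.
elim: s x => [|y s IH] x //; rewrite inflate_cons /= => /andP[lt_xy /IH path_y].
by apply/and3P; split => //; lia.
Qed.

Lemma sorted_inflate s :
  sorted (fun a b : int => a < b) s -> sorted (fun a b : int => a < b) (inflate s).
Proof.
case: s => [|x s] // /path_inflate path_x; rewrite inflate_cons /=.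
by apply/andP; split => //; lia.
Qed.

Lemma is_cis_inflate s X Y :
  is_cis s X Y -> is_cis (inflate s) (inflate X) (inflate Y).
Proof.
by case/and3P=> sorted_s sub_sX sub_sY; rewrite /is_cis sorted_inflate ?subseq_inflate.
Qed.

Lemma dvdz2_double_sub1 (a : int) : (2 %| 2 * a - 1)%Z = false.
Proof. by apply/negbTE; lia. Qed.

Lemma filter_even_inflate A :
  [seq x <- inflate A | (2 %| x)%Z] = [seq 2 * a | a <- A].
Proof.
elim: A => // a A IH.
by rewrite inflate_cons /= -/(inflate A) dvdz2_double_sub1 dvdz_mulr // IH.
Qed.

Lemma filter_odd_inflate A :
  [seq x <- inflate A | ~~ (2 %| x)%Z] = [seq 2 * a - 1 | a <- A].
Proof.
elim: A => // a A IH.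
by rewrite inflate_cons /= -/(inflate A) dvdz2_double_sub1 dvdz_mulr // IH.
Qed.

Theorem lemma9 (A B : seq int) :
  lcis (inflate A) (inflate B) = (2 * lcis A B)%N.
Proof.
apply/eqP; rewrite eqn_leq; apply/andP; split.
- apply: lcis_le => s /(is_cis_filter _) cis_s.
  rewrite -(count_predC (fun x : int => (2 %| x)%Z)) -!size_filter mul2n -addnn.
  apply: leq_add.
  + rewrite -(@lcis_map (fun a => 2 * a)); last by move=> x y; lia.
    by rewrite -!filter_even_inflate size_le_lcis.
  + rewrite -(@lcis_map (fun a => 2 * a - 1)); last by move=> x y; lia.
    by rewrite -!filter_odd_inflate size_le_lcis.
- have [t cis_t <-] := lcis_witness A B.
  by rewrite -size_inflate size_le_lcis // is_cis_inflate.
Qed.
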